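(* Let $n\geq 10$ be an integer and let $C_n$ be a set of $n$ points in the plane in general and convex position. Then $\mu(D(C_n))=\binom{n}{2}-5$.
   Context: A set of points in the plane is in general position if no three of its points are collinear, and in convex position if every point is a vertex of its convex hull. The disjointness graph of segments $D(P)$ is the graph whose vertices are all closed straight-line segments with both endpoints in $P$, two being adjacent if and only if they are disjoint. For a graph $G$ and $U\subseteq V(G)$, two distinct vertices $x,y\in U$ are $U$-mutually visible if $G$ contains a shortest $x$-$y$ path none of whose internal vertices lies in $U$; $U$ is a mutual-visibility set if every two distinct vertices of $U$ are $U$-mutually visible. The mutual-visibility number $\mu(G)$ is the maximum size of a mutual-visibility set of $G$. *)

From HB Require Import structures.
From mathcomp Require Import all_boot all_order all_algebra.
From mathcomp Require Import boolp reals.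
Set Implicit Arguments. Unset Strict Implicit. Unset Printing Implicit Defensive.
Import Order.TTheory GRing.Theory Num.Theory.
Local Open Scope ring_scope.

Section Geometry.
Variable R : realType.
Definition point := (R * R)%type.

Definition orient (a b c : point) : R :=
  (b.1 - a.1) * (c.2 - a.2) - (b.2 - a.2) * (c.1 - a.1).

Variable n : nat.
Variable p : 'I_n -> point.

Definition general_position : Prop :=
  forall i j k : 'I_n, i != j -> j != k -> i != k -> orient (p i) (p j) (p k) != 0.

Definition in_hull_of_others (i : 'I_n) (x : point) : Prop :=
  exists w : 'I_n -> R,
    [/\ forall j, 0 <= w j, w i = 0, \sum_j w j = 1,
        x.1 = \sum_j w j * (p j).1 & x.2 = \sum_j w j * (p j).2].

Definition convex_position : Prop :=
  forall i : 'I_n, ~ in_hull_of_others i (p i).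

(* segments with both endpoints in P: 2-element sets of indices *)
Definition segment := {s : {set 'I_n} | #|s| == 2%N}.

Definition on_segment (s : segment) (x : point) : Prop :=
  exists i j t, [/\ i \in val s, j \in val s, 0 <= t <= 1,
    x.1 = (1 - t) * (p i).1 + t * (p j).1 &
    x.2 = (1 - t) * (p i).2 + t * (p j).2].

Definition disj_adj : rel segment :=
  fun s s' => `[< ~ exists x, on_segment s x /\ on_segment s' x >].
End Geometry.

Section Visibility.
Variables (T : finType) (e : rel T).

(* x :: s is a walk from x to y *)
Definition walk (x y : T) (s : seq T) := path e x s && (last x s == y).

(* s is a shortest x-y walk (its length is size s) *)
Definition shortest_path (x y : T) (s : seq T) : Prop :=
  walk x y s /\ forall s', walk x y s' -> (size s <= size s')%N.

(* internal vertices of the walk x :: s *)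
Definition internal (x : T) (s : seq T) := behead (belast x s).

Definition mutually_visible (U : {set T}) (x y : T) : Prop :=
  exists s, shortest_path x y s /\ all (fun v => v \notin U) (internal x s).

Definition mv_set (U : {set T}) : Prop :=
  forall x y, x \in U -> y \in U -> x != y -> mutually_visible U x y.

Definition mu : nat := \max_(U : {set T} | `[< mv_set U >]) #|U|.
End Visibility.

From HB Require Import structures.
From mathcomp Require Import all_boot all_order all_algebra.
From mathcomp Require Import boolp reals.
From mathcomp Require Import ring lra zify.
Set Implicit Arguments. Unset Strict Implicit. Unset Printing Implicit Defensive.
Import Order.TTheory GRing.Theory Num.Theory.

(* Five pairwise vertex-disjoint edges of the convex hull exist since n >= 10,
   and a hull edge is disjoint from every segment avoiding its endpoints.  Two
   segments have at most four endpoints, so they always have one of these five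
   hull edges as a common neighbour: D(P) has diameter at most 2, and all
   segments but the five hull edges form a mutual-visibility set.

   Conversely, let U be a mutual-visibility set whose complement W has at most
   four segments.  There are two intersecting segments x, y outside W such that
   every member of W shares an endpoint with x or y: two segments with a common
   endpoint, or the crossing pairing of four points (among four points in convex
   position, one of the three pairings crosses).  A shortest x-y path has length
   2 and its middle vertex is disjoint from x and y, yet must lie in W.  The
   existence of x and y only depends on which of the at most eight endpoints of
   W and two further points coincide; it is checked by computation over all
   such coincidence patterns. *)

(** * Orientation and convex position *)

Section Orientation.
Variable R : realType.
Local Open Scope ring_scope.
Implicit Types a b c x P Q A B : point R.

Lemma orient_cycle a b c : orient a b c = orient b c a.
Proof. by rewrite /orient; ring. Qed.

Lemma orient_swap12 a b c : orient a b c = - orient b a c.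
Proof. by rewrite /orient; ring. Qed.

Lemma orient_swap23 a b c : orient a b c = - orient a c b.
Proof. by rewrite /orient; ring. Qed.

Lemma orient_aab a c : orient a a c = 0.
Proof. by rewrite /orient; ring. Qed.

Lemma orient_aba a b : orient a b a = 0.
Proof. by rewrite /orient; ring. Qed.

Lemma orient_abb a b : orient a b b = 0.
Proof. by rewrite /orient; ring. Qed.

Lemma orient_convex A B P Q x (t : R) :
  x.1 = (1 - t) * P.1 + t * Q.1 -> x.2 = (1 - t) * P.2 + t * Q.2 ->
  orient A B x = (1 - t) * orient A B P + t * orient A B Q.
Proof. by move=> e1 e2; rewrite /orient e1 e2; ring. Qed.

Lemma ratio_mem01 (g h : R) : g * h < 0 -> 0 <= g / (g - h) <= 1.
Proof.
move=> gh; apply/andP; have [g_gt0|g_le0] := ltrP 0 g.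
  have gh_gt0 : 0 < g - h by nra.
  by split; [rewrite divr_ge0 // ltW | rewrite ler_pdivrMr // mul1r; nra].
have gh_lt0 : g - h < 0 by nra.
by split; [rewrite -divrNN divr_ge0 //; lra | rewrite ler_ndivrMr // mul1r; nra].
Qed.

Definition separates P Q A B := orient P Q A * orient P Q B < 0.

Definition crosses P Q A B := separates P Q A B /\ separates A B P Q.

Lemma crosses_meet P Q A B : crosses P Q A B ->
  exists t s, [/\ 0 <= t <= 1, 0 <= s <= 1,
    (1 - t) * P.1 + t * Q.1 = (1 - s) * A.1 + s * B.1 &
    (1 - t) * P.2 + t * Q.2 = (1 - s) * A.2 + s * B.2].
Proof.
move=> [sepPQ sepAB]; rewrite /separates in sepPQ sepAB.
have nzAB : orient A B P - orient A B Q != 0 by apply/eqP => e; nra.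
have nzPQ : orient P Q A - orient P Q B != 0 by apply/eqP => e; nra.
exists (orient A B P / (orient A B P - orient A B Q)),
       (orient P Q A / (orient P Q A - orient P Q B)).
split; [exact: ratio_mem01 | exact: ratio_mem01 | |];
  by move: nzAB nzPQ; rewrite /orient => nzAB nzPQ; field; rewrite nzAB nzPQ.
Qed.

End Orientation.

Lemma sum_supported3 (R : pzSemiRingType) (T : finType) (a b c : T) (w F : T -> R) :
  uniq [:: a; b; c] -> (forall j, j \notin [:: a; b; c] -> w j = 0%R) ->
  (\sum_j w j * F j = w a * F a + w b * F b + w c * F c)%R.
Proof.
move=> abc w0; rewrite (bigID (mem [:: a; b; c])) /=.
rewrite [X in (_ + X)%R]big1 ?addr0; last by move=> j /w0 ->; rewrite mul0r.
by rewrite -big_uniq //= !big_cons big_nil addr0 addrA.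
Qed.

Section ConvexPosition.
Variables (R : realType) (n : nat) (p : 'I_n -> point R).
Local Open Scope ring_scope.
Hypothesis gp : general_position p.
Hypothesis conv : convex_position p.

Lemma uniq_of_orient_neq0 (i j k : 'I_n) :
  orient (p i) (p j) (p k) != 0 -> uniq [:: i; j; k].
Proof.
move=> ijk; rewrite /= !inE negb_or -!andbA; apply/and4P; split => //;
  by apply: contraNneq ijk => ->; rewrite ?orient_aab ?orient_aba ?orient_abb.
Qed.

Lemma crosses_uniq (i1 i2 i3 i4 : 'I_n) :
  crosses (p i1) (p i2) (p i3) (p i4) -> uniq [:: i1; i2; i3; i4].
Proof.
case=> /ltr0_neq0 + /ltr0_neq0; rewrite !mulf_eq0 !negb_or.
move=> /andP [/uniq_of_orient_neq0 u123 /uniq_of_orient_neq0 u124].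
move=> /andP [/uniq_of_orient_neq0 u341 _].
move: u123 u124 u341; rewrite /= !inE !negb_or -!andbA.
by move=> /and4P [-> -> -> _] /and4P [_ -> -> _] /and4P [-> _ _ _].
Qed.

Lemma not_in_triangle (a b c x : 'I_n) :
  0 < orient (p a) (p b) (p x) -> 0 < orient (p b) (p c) (p x) ->
  0 < orient (p c) (p a) (p x) -> False.
Proof.
move=> abx bcx cax.
have /uniq_of_orient_neq0 := lt0r_neq0 abx; have /uniq_of_orient_neq0 := lt0r_neq0 bcx.
have /uniq_of_orient_neq0 := lt0r_neq0 cax.
rewrite /= !inE !negb_or -!andbA => /and4P [ca cx ax _] /and4P [bc bx _ _] /and4P [ab _ _ _].
set D := orient (p a) (p b) (p c).
have eD : D = orient (p b) (p c) (p x) + orient (p c) (p a) (p x) + orient (p a) (p b) (p x).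
  by rewrite /D /orient; ring.
have D_gt0 : 0 < D by lra.
(* The barycentric coordinates of [x] in the triangle [a b c]. *)
pose w j := if j == a then orient (p b) (p c) (p x) / D else
            if j == b then orient (p c) (p a) (p x) / D else
            if j == c then orient (p a) (p b) (p x) / D else 0.
have abc : uniq [:: a; b; c] by rewrite /= !inE negb_or ab eq_sym ca bc.
have w0 j : j \notin [:: a; b; c] -> w j = 0.
  by rewrite !inE !negb_or /w => /and3P [/negbTE -> /negbTE -> /negbTE ->].
have wa : w a = orient (p b) (p c) (p x) / D by rewrite /w eqxx.
have wb : w b = orient (p c) (p a) (p x) / D by rewrite /w eq_sym (negbTE ab) eqxx.
have wc : w c = orient (p a) (p b) (p x) / D.
  by rewrite /w (negbTE ca) eq_sym (negbTE bc) eqxx.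
have wE F : \sum_j w j * F j =
    (orient (p b) (p c) (p x) * F a + orient (p c) (p a) (p x) * F b
     + orient (p a) (p b) (p x) * F c) / D.
  by rewrite (sum_supported3 F abc w0) wa wb wc; field; exact: lt0r_neq0.
apply: (conv (i := x)); exists w; split.
- by move=> j; rewrite /w; do ?case: ifP => _; rewrite ?lexx //; apply: divr_ge0; lra.
- by rewrite /w !(eq_sym x) (negbTE ax) (negbTE bx) (negbTE cx).
- have := wE (fun _ => 1); under eq_bigr do rewrite mulr1.
  by move=> ->; rewrite !mulr1 -eD divff // lt0r_neq0.
- by rewrite wE; move: (lt0r_neq0 D_gt0); rewrite /D /orient => nz; field.
- by rewrite wE; move: (lt0r_neq0 D_gt0); rewrite /D /orient => nz; field.
Qed.

(* If [c d] did not separate [a] from [b], one of [a], [b] would lie inside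
   the triangle of the three other points. *)
Lemma separates_sym (a b c d : 'I_n) :
  separates (p a) (p b) (p c) (p d) -> separates (p c) (p d) (p a) (p b).
Proof.
wlog x1_gt0 : c d / 0 < orient (p a) (p b) (p c).
  move=> wlog_sep sep; have [x1_gt0|] := ltrP 0 (orient (p a) (p b) (p c)).
    exact: wlog_sep.
  rewrite le_eqVlt => /orP [/eqP x1_0|x1_lt0]; first by move: sep; rewrite /separates x1_0 mul0r ltxx.
  have : separates (p d) (p c) (p a) (p b) by apply: wlog_sep; rewrite /separates in sep *; nra.
  by rewrite /separates !(orient_swap12 (p d)); nra.
rewrite /separates => sep; have x2_lt0 : orient (p a) (p b) (p d) < 0 by nra.
have /uniq_of_orient_neq0 := lt0r_neq0 x1_gt0.
have /uniq_of_orient_neq0 := ltr0_neq0 x2_lt0.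
rewrite /= !inE !negb_or -!andbA => /and4P [ab ad bd _] /and4P [_ ac bc _].
have cd : c != d by apply: contraTneq sep => ->; rewrite -expr2 ltNge sqr_ge0.
have x3_neq0 : orient (p c) (p d) (p a) != 0 by apply: gp; rewrite // eq_sym.
have x4_neq0 : orient (p c) (p d) (p b) != 0 by apply: gp; rewrite // eq_sym.
rewrite ltNge; apply/negP => x34_ge0.
move: x3_neq0 x4_neq0; rewrite !neq_lt => /orP [x3_lt0|x3_gt0] /orP [x4_lt0|x4_gt0]; try nra.
- apply: (@not_in_triangle a d c b).
  + by rewrite orient_swap23; lra.
  + by rewrite orient_swap12; lra.
  + by rewrite orient_cycle.
- apply: (@not_in_triangle b c d a).
  + by rewrite -orient_cycle.
  + done.
  + by rewrite orient_cycle orient_swap12; lra.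
Qed.

Lemma crosses_of_separates (a b c d : 'I_n) :
  separates (p a) (p b) (p c) (p d) -> crosses (p a) (p b) (p c) (p d).
Proof. by move=> sep; split; [|apply: separates_sym]. Qed.

Lemma four_points_crossing (a b c d : 'I_n) : uniq [:: a; b; c; d] ->
  exists i1 i2 i3 i4, [set i1; i2] :|: [set i3; i4] = [set a; b; c; d]
                      /\ crosses (p i1) (p i2) (p i3) (p i4).
Proof.
rewrite /= !inE !negb_or -!andbA => /and4P [ab ac ad /and4P [bc bd cd _]].
have x1_neq0 : orient (p a) (p b) (p c) != 0 by apply: gp.
have x2_neq0 : orient (p a) (p b) (p d) != 0 by apply: gp.
have y_neq0 : orient (p a) (p c) (p d) != 0 by apply: gp.
have pairing i1 i2 i3 i4 : separates (p i1) (p i2) (p i3) (p i4) ->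
    [set i1; i2] :|: [set i3; i4] = [set a; b; c; d] -> exists j1 j2 j3 j4,
    [set j1; j2] :|: [set j3; j4] = [set a; b; c; d] /\ crosses (p j1) (p j2) (p j3) (p j4).
  by move=> /crosses_of_separates cr e; exists i1, i2, i3, i4.
(* The products [O(abc) O(abd)], [O(acb) O(acd)] and [O(adb) O(adc)] multiply to
   [- (O(abc) O(abd) O(acd)) ^+ 2 < 0], so one of them is negative. *)
have [sep1|x12] := ltrP (orient (p a) (p b) (p c) * orient (p a) (p b) (p d)) 0.
  by apply: (pairing a b c d sep1); apply/setP => z; rewrite !inE orbA.
have [sep2|x13] := ltrP (orient (p a) (p c) (p b) * orient (p a) (p c) (p d)) 0.
  apply: (pairing a c b d sep2); apply/setP => z; rewrite !inE.
  by case: (z == a); case: (z == b); case: (z == c).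
have sep3 : separates (p a) (p d) (p b) (p c).
  move: x13; rewrite /separates !(orient_swap23 (p a) (p d)) orient_swap23.
  by move: x1_neq0 x2_neq0 y_neq0; rewrite !neq_lt => /orP [] ? /orP [] ? /orP [] ?; nra.
apply: (pairing a d b c sep3); apply/setP => z; rewrite !inE.
by case: (z == a); case: (z == b); case: (z == c); case: (z == d).
Qed.

End ConvexPosition.

(** * Segments and hull edges *)

Section Segments.
Variables (R : realType) (n : nat) (p : 'I_n -> point R).
Local Open Scope ring_scope.
Local Notation adj := (disj_adj p).

Lemma disj_adjC (s t : segment n) : adj s t = adj t s.
Proof. by apply/asboolP/asboolP => st [x [xs xt]]; apply: st; exists x. Qed.

Lemma common_point_not_adj (s t : segment n) k : k \in val s -> k \in val t -> ~~ adj s t.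
Proof.
move=> ks kt; apply/negP => /asboolP; apply.
by exists (p k); split; exists k, k, 0; split; rewrite ?lexx ?ler01 ?subr0 ?mul1r ?mul0r ?addr0.
Qed.

Lemma crossing_not_adj (s t : segment n) a b c d :
  val s = [set a; b] -> val t = [set c; d] ->
  crosses (p a) (p b) (p c) (p d) -> ~~ adj s t.
Proof.
move=> sE tE /crosses_meet [u [v [u01 v01 e1 e2]]]; apply/negP => /asboolP; apply.
exists ((1 - u) * (p a).1 + u * (p b).1, (1 - u) * (p a).2 + u * (p b).2); split.
  by exists a, b, u; rewrite sE set21 set22.
by exists c, d, v; rewrite tE set21 set22 /= e1 e2.
Qed.

Definition hull_edge (i j : 'I_n) :=
  forall k, k != i -> k != j -> 0 < orient (p i) (p j) (p k).

Lemma hull_edge_adj (s t : segment n) i j : val s = [set i; j] -> hull_edge i j ->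
  [disjoint val s & val t] -> adj s t.
Proof.
move=> sE hull st; apply/asboolP.
move=> [x [[a [b [u [aS bS _ xu1 xu2]]]] [c [d [v [ct dt /andP [v0 v1] xv1 xv2]]]]]].
have on_line k : k \in val s -> orient (p i) (p j) (p k) = 0.
  by rewrite sE => /set2P [] ->; rewrite ?orient_aba ?orient_abb.
have off_line k : k \in val t -> 0 < orient (p i) (p j) (p k).
  move=> kt; have ks : k \notin val s by rewrite (disjointFl st kt).
  by apply: hull; apply: contraNneq ks => ->; rewrite sE !inE eqxx ?orbT.
have := orient_convex (p i) (p j) xv1 xv2.
rewrite (orient_convex (p i) (p j) xu1 xu2) (on_line a) ?(on_line b) // !mulr0 addr0.
by have := off_line _ ct; have := off_line _ dt; nra.
Qed.

Lemma seg_subproof (i j : 'I_n) : i != j -> #|[set i; j]| == 2.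
Proof. by rewrite cards2 => ->. Qed.

Definition seg (i j : 'I_n) (ij : i != j) : segment n :=
  exist (fun s : {set 'I_n} => #|s| == 2) [set i; j] (seg_subproof ij).

Lemma card_segment : #|{: segment n}| = 'C(n, 2).
Proof. by rewrite card_sig -[in RHS](card_ord n) -card_draws; apply: eq_card => s; rewrite !inE. Qed.

End Segments.

Section AngularOrder.
Variables (R : realType) (n : nat) (p : 'I_n -> point R).
Local Open Scope ring_scope.
Hypothesis gp : general_position p.
Hypothesis conv : convex_position p.
Variable o : 'I_n.
Hypothesis o_lowest : forall j, j != o ->
  (p o).1 < (p j).1 \/ (p o).1 = (p j).1 /\ (p o).2 < (p j).2.

Definition ccw (j k : 'I_n) := 0 < orient (p o) (p j) (p k).

Lemma ccw_irr j : ~~ ccw j j.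
Proof. by rewrite /ccw orient_abb ltxx. Qed.

Lemma ccw_o j : ~~ ccw o j.
Proof. by rewrite /ccw orient_aab ltxx. Qed.

Lemma ccw_asym j k : ccw j k -> ~~ ccw k j.
Proof. by rewrite /ccw (orient_swap23 (p o) (p k)) oppr_gt0 -leNgt => /ltW. Qed.

Lemma ccw_total j k : j != o -> k != o -> j != k -> ccw j k || ccw k j.
Proof.
move=> jo ko jk; have : orient (p o) (p j) (p k) != 0 by apply: gp; rewrite // eq_sym.
by rewrite /ccw (orient_swap23 (p o) (p k)) neq_lt oppr_gt0 orbC.
Qed.

(* All points lie to the right of [o] (or above it on its vertical), so the
   counterclockwise order around [o] is transitive. *)
Lemma ccw_trans j k l : j != o -> k != o -> l != o -> j != l ->
  ccw j k -> ccw k l -> ccw j l.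
Proof.
move=> jo ko lo jl; rewrite /ccw /orient.
have := o_lowest jo; have := o_lowest ko; have := o_lowest lo.
set U1 := (p j).1 - (p o).1; set U2 := (p j).2 - (p o).2.
set V1 := (p k).1 - (p o).1; set V2 := (p k).2 - (p o).2.
set W1 := (p l).1 - (p o).1; set W2 := (p l).2 - (p o).2.
have : orient (p o) (p j) (p l) != 0 by apply: gp; rewrite // eq_sym.
rewrite /orient -/U1 -/U2 -/W1 -/W2 => nz hl hk hj jk kl.
have U1_ge0 : 0 <= U1 by rewrite /U1; case: hj => [|[]]; lra.
have W1_ge0 : 0 <= W1 by rewrite /W1; case: hl => [|[]]; lra.
have [V1_gt0|[V1_0 V2_gt0]] : 0 < V1 \/ V1 = 0 /\ 0 < V2.
- by rewrite /V1 /V2; case: hk => [|[]]; lra.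
- have id : (U1 * V2 - U2 * V1) * W1 + (V1 * W2 - V2 * W1) * U1 = (U1 * W2 - U2 * W1) * V1.
    by ring.
  move: nz; rewrite neq_lt => /orP [neg|//]; nra.
- move: kl; rewrite V1_0 mul0r sub0r oppr_gt0 => kl; nra.
Qed.

Definition rank (j : 'I_n) := #|[set k | ccw k j]|.

Lemma rank_lt j k : j != o -> k != o -> ccw j k -> (rank j < rank k)%N.
Proof.
move=> jo ko jk; apply: proper_card; apply/properP; split.
  apply/subsetP => l; rewrite !inE => lj.
  have lo : l != o by apply: contraTneq lj => ->; exact: ccw_o.
  have lk : l != k by apply: contraTneq lj => ->; exact: ccw_asym.
  exact: (ccw_trans lo jo ko lk lj jk).
by exists j; rewrite !inE // ccw_irr.
Qed.

Lemma rank_inj j k : j != o -> k != o -> rank j = rank k -> j = k.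
Proof.
move=> jo ko e; apply/eqP; apply: contraT => jk.
by case/orP: (ccw_total jo ko jk) => [/(rank_lt jo ko)|/(rank_lt ko jo)]; rewrite e ltnn.
Qed.

Lemma rank_ltn j : j != o -> (rank j < n.-1)%N.
Proof.
move=> jo; have sub : [set k | ccw k j] \subset ~: [set o; j].
  apply/subsetP => k; rewrite !inE negb_or.
  by apply: contraTT; rewrite negb_and !negbK => /orP [] /eqP ->; rewrite ?ccw_o ?ccw_irr.
have := subset_leq_card sub; have := cardsC [set o; j].
by rewrite cards2 eq_sym jo card_ord /rank; lia.
Qed.

Lemma rank_onto r : (r < n.-1)%N -> exists2 j, j != o & rank j = r.
Proof.
move=> rn; pose s := map rank (enum [set~ o]).
have s_uniq : uniq s.
  rewrite map_inj_in_uniq ?enum_uniq // => j k; rewrite !mem_enum !in_setC1.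
  exact: rank_inj.
have s_sub : {subset s <= iota 0 n.-1}.
  by move=> x /mapP [j]; rewrite mem_enum in_setC1 => /rank_ltn jn ->; rewrite mem_iota.
have s_size : (size (iota 0 n.-1) <= size s)%N.
  by rewrite size_iota size_map -cardE cardsC1 card_ord.
have [_ sE] := uniq_min_size s_uniq s_sub s_size.
have : r \in s by rewrite sE mem_iota.
by case/mapP => j; rewrite mem_enum in_setC1 => jo ->; exists j.
Qed.

Lemma hull_edge_first q : q != o -> rank q = 0 -> hull_edge p o q.
Proof.
move=> qo q0 l lo lq; case/orP: (ccw_total lo qo lq) => // /(rank_lt lo qo).
by rewrite q0 ltn0.
Qed.

Lemma hull_edge_next j l : j != o -> l != o -> rank l = (rank j).+1 -> hull_edge p j l.
Proof.
move=> jo lo jl k kj kl.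
have jl_neq : j != l by apply/eqP => e; rewrite e in jl; lia.
have ccw_jl : ccw j l.
  by case/orP: (ccw_total jo lo jl_neq) => // /(rank_lt lo jo); rewrite jl ltnNge leqnSn.
have [-> | ko] := eqVneq k o; first by rewrite -orient_cycle.
have : orient (p j) (p l) (p k) != 0 by apply: gp; rewrite // eq_sym.
rewrite neq_lt => /orP [neg|//].
exfalso; case/orP: (ccw_total ko jo kj) => [ccw_kj|ccw_jk].
  apply: (@not_in_triangle _ _ _ conv o k l j).
  - exact: ccw_kj.
  - by rewrite -orient_cycle orient_swap23; lra.
  - by rewrite orient_cycle.
have ccw_lk : ccw l k.
  have lk : l != k by rewrite eq_sym.
  case/orP: (ccw_total lo ko lk) => // /(rank_lt ko lo).
  by have := rank_lt jo ko ccw_jk; rewrite jl; lia.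
apply: (@not_in_triangle _ _ _ conv o j k l).
- exact: ccw_jl.
- by rewrite orient_swap23; lra.
- by rewrite orient_cycle.
Qed.

End AngularOrder.

Section HullSegments.
Variables (R : realType) (n : nat) (p : 'I_n -> point R).
Hypothesis gp : general_position p.
Hypothesis conv : convex_position p.
Hypothesis p_inj : injective p.
Local Open Scope ring_scope.

Lemma lowest_point : (0 < n)%N ->
  exists o, forall j, j != o -> (p o).1 < (p j).1 \/ (p o).1 = (p j).1 /\ (p o).2 < (p j).2.
Proof.
move=> n_gt0; pose lex i : (R *l R)%type := p i.
exists [arg min_(i < Ordinal n_gt0) lex i]%O.
case: arg_minP => // o _ o_min j jo.
have : (lex o < lex j)%O.
  by rewrite lt_neqAle o_min // andbT; apply: contra jo => /eqP /p_inj ->.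
rewrite /lex; case: (p o) => [xo yo]; case: (p j) => [xj yj] /=.
rewrite ltxi_pair /= le_eqVlt => /andP [/orP [/eqP <-|lt_x] lt_y]; last by left.
by right; split => //; move: lt_y; rewrite lexx.
Qed.

Lemma five_hull_segments : (10 <= n)%N ->
  exists H : 'I_5 -> segment n,
    (forall k (t : segment n), [disjoint val (H k) & val t] -> disj_adj p (H k) t) /\
    (forall k l, k != l -> [disjoint val (H k) & val (H l)]).
Proof.
move=> n10; have [o o_lowest] := lowest_point (leq_trans (isT : 0 < 10)%N n10).
pose q r := odflt o [pick j | (j != o) && (rank p o j == r)].
have qP r : (r < n.-1)%N -> q r != o /\ rank p o (q r) = r.
  move=> rn; rewrite /q; case: pickP => [j /andP [jo /eqP //]|none].
  by have [j jo jr] := rank_onto gp o_lowest rn; move: (none j); rewrite jo jr eqxx.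
pose v i := if i is i'.+1 then q i' else o.
have v_inj i j : v i = v j -> (i < 10)%N -> (j < 10)%N -> i = j.
  case: i j => [|i] [|j] //=.
  - by move=> e _ j10; have [qo _] := qP j ltac:(lia); move: qo; rewrite -e eqxx.
  - by move=> e i10 _; have [qo _] := qP i ltac:(lia); move: qo; rewrite e eqxx.
  - move=> e i10 j10; have [_ ri] := qP i ltac:(lia); have [_ rj] := qP j ltac:(lia).
    by rewrite -ri -rj e.
have v_neq (k : 'I_5) : v k.*2 != v k.*2.+1.
  by apply/eqP => /v_inj; have := ltn_ord k; lia.
have v_hull (k : 'I_5) : hull_edge p (v k.*2) (v k.*2.+1).
  case: k => [[|k] k5] /=.
    by have [qo q0] := qP 0%N ltac:(lia); exact: hull_edge_first.
  have [qo1 r1] := qP k.*2.+1 ltac:(lia); have [qo2 r2] := qP k.*2.+2 ltac:(lia).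
  by rewrite doubleS; apply: (hull_edge_next gp conv o_lowest qo1 qo2); rewrite r1 r2.
exists (fun k => seg (v_neq k)); split => [k t|k l kl].
  exact: (hull_edge_adj (s := seg (v_neq k)) (erefl _) (v_hull k)).
rewrite -setI_eq0; apply/eqP/setP => z; rewrite !inE; apply/negbTE/negP.
case/andP => /orP [] /eqP -> /orP [] /eqP /v_inj;
  by move: kl; rewrite -val_eqE /= -!muln2; have := ltn_ord k; have := ltn_ord l; lia.
Qed.

End HullSegments.

(** * Covering a set of at most four pairs *)

Lemma pairwise_in (T : eqType) (r : rel T) (s : seq T) : pairwise r s ->
  {in s &, forall x y, x != y -> r x y || r y x}.
Proof.
elim: s => //= z s IH /andP [rz rs] x y; rewrite !inE.
move=> /orP [/eqP ->|xs] /orP [/eqP ->|ys]; rewrite ?eqxx // => xy.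
- by rewrite (allP rz).
- by rewrite (allP rz) ?orbT.
- exact: IH.
Qed.

Lemma set2_eq (T : finType) (x y a b : T) : x != y -> [set x; y] = [set a; b] ->
  (x == a) && (y == b) || (x == b) && (y == a).
Proof.
move=> xy e; have := set21 x y; have := set22 x y; rewrite e !inE.
by move: xy => /[swap] /orP [] /eqP -> /[swap] /orP [] /eqP ->; rewrite ?eqxx ?orbT.
Qed.

(* The VM evaluates arguments eagerly: the search below uses [if] and
   [has_sc] so that it stops at the first witness. *)
Fixpoint has_sc (T : Type) (a : pred T) (s : seq T) : bool :=
  if s is x :: s' then if a x then true else has_sc a s' else false.

Lemma has_scP (T : Type) (a : pred T) s : has_sc a s -> exists x, a x.
Proof. by elim: s => //= x s IH; case: ifP => [ax _|_ /IH //]; exists x. Qed.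

Section IndexPattern.
(* Ten points, given by their indices, [E k l] meaning that points [k] and [l]
   coincide; points [2i] and [2i+1], for [i < 4], are the ends of four pairs. *)
Variable E : rel nat.

Definition linked_at s t :=
  has (fun i => E s i.*2 && E t i.*2.+1 || E s i.*2.+1 && E t i.*2) (iota 0 4).

Definition covers_at (Q : seq nat) :=
  all (fun i => has (fun q => E q i.*2 || E q i.*2.+1) Q) (iota 0 4).

Definition apart_at s t := if E s t then false else ~~ linked_at s t.

Lemma apart_atE s t : apart_at s t = ~~ E s t && ~~ linked_at s t.
Proof. by rewrite /apart_at; case: (E s t). Qed.

Definition fan_at d u w :=
  if apart_at d u then if apart_at d w then ~~ E u w && covers_at [:: d; u; w] else false
  else false.

Definition quad_at (Q : seq nat) := if pairwise apart_at Q then covers_at Q else false.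

Definition above k := iota k.+1 (9 - k).

Definition witness_at :=
  if has_sc (fun d => has_sc (fun u => has_sc (fun w => fan_at d u w) (above u))
                       (iota 0 10)) (iota 0 10)
  then true
  else has_sc (fun a => has_sc (fun b => has_sc (fun c => has_sc (fun d =>
         quad_at [:: a; b; c; d]) (above c)) (above b)) (above a)) (iota 0 10).

Lemma witness_atP : witness_at ->
  (exists d u w, fan_at d u w) \/ (exists a b c d, quad_at [:: a; b; c; d]).
Proof.
rewrite /witness_at; case: ifP => [+ _|_].
  by case/has_scP => d /has_scP [u /has_scP [w fan]]; left; exists d, u, w.
by case/has_scP => a /has_scP [b /has_scP [c /has_scP [d quad]]]; right; exists a, b, c, d.
Qed.

End IndexPattern.

Fixpoint all_prefixed (P : seq nat -> bool) (k : nat) (pre : seq nat) : bool :=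
  if k is k'.+1 then all (fun x => all_prefixed P k' (rcons pre x)) (iota 0 (size pre).+1)
  else P pre.

Lemma all_prefixedP P k pre s : all_prefixed P k pre -> size s = k ->
  (forall i, i < k -> nth 0 s i <= size pre + i) -> P (pre ++ s).
Proof.
elim: k pre s => [|k IH] pre [|x s] Pk //= => [_ _|[sk] bnd]; first by rewrite cats0.
rewrite -cat_rcons; apply: IH => //.
  by apply: (allP Pk); rewrite mem_iota; have := bnd 0 isT; rewrite addn0 /=; lia.
by move=> i ik; rewrite size_rcons; have := bnd i.+1 ik; rewrite addnS.
Qed.

Definition kernel (r : seq nat) : rel nat := fun s t => nth 8 r s == nth 8 r t.

Lemma witness_all_patterns :
  all_prefixed (fun r => let E := kernel (r ++ [:: 8; 9]) in
    if all (fun i => ~~ E i.*2 i.*2.+1) (iota 0 4) then witness_at E else true) 8 [::].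
Proof. by vm_compute. Qed.

(* Every configuration is the kernel of its first-occurrence labelling, which
   is one of the patterns checked above. *)
Lemma kernel_witness (T : eqType) (pt : nat -> T) :
  (forall i, i < 4 -> pt i.*2 != pt i.*2.+1) ->
  (forall k, k < 8 -> pt k != pt 8) -> (forall k, k < 9 -> pt k != pt 9) ->
  (forall k, 10 <= k -> pt k = pt 8) ->
  witness_at (fun s t => pt s == pt t).
Proof.
move=> pairs fresh8 fresh9 beyond.
pose pts := [seq pt k | k <- iota 0 10]; pose rho k := index (pt k) pts.
have pt_in k : pt k \in pts.
  by case: (ltnP k 10) => [k10|/beyond ->]; apply: map_f; rewrite mem_iota.
have ptE k : k < 10 -> pt k = nth (pt 0) pts k by move=> k10; rewrite (nth_map 0) ?nth_iota.
have size_pts : size pts = 10 by rewrite size_map size_iota.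
have rho_lt k : rho k < 10 by rewrite -size_pts index_mem.
have pt_rho k : pt (rho k) = pt k by rewrite ptE // nth_index.
have rhoE k l : (pt k == pt l) = (rho k == rho l).
  by apply/eqP/eqP => e; [rewrite /rho e | rewrite -pt_rho e pt_rho].
have rho_le k : k < 10 -> rho k <= k.
  by move=> k10; rewrite /rho ptE // index_nth // size_pts.
have rho_fix k : k < 10 -> (forall j, j < k -> pt j != pt k) -> rho k = k.
  move=> k10 fresh; apply/eqP; rewrite eqn_leq rho_le //= leqNgt.
  by apply/negP => /fresh; rewrite pt_rho eqxx.
pose r := [seq rho k | k <- iota 0 8].
have nthE k : nth 8 (r ++ [:: 8; 9]) k = rho k.
  rewrite nth_cat size_map size_iota; case: ltnP => [k8|k8].
    by rewrite (nth_map 0) ?nth_iota ?size_iota.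
  case: k k8 => [|[|[|[|[|[|[|[|[|[|k]]]]]]]]]] //= _.
  - by rewrite rho_fix.
  - by rewrite rho_fix.
  - by rewrite nth_nil /rho beyond // -/(rho 8) rho_fix.
have kernelE : kernel (r ++ [:: 8; 9]) = (fun s t => pt s == pt t).
  by apply/funext => s; apply/funext => t; rewrite /kernel !nthE rhoE.
have all_pairs : all (fun i => pt i.*2 != pt i.*2.+1) (iota 0 4).
  by apply/allP => i; rewrite mem_iota => /pairs.
have := all_prefixedP witness_all_patterns (s := r); cbv beta zeta.
rewrite cat0s kernelE all_pairs size_map size_iota; apply=> // i i8.
by rewrite (nth_map 0) ?size_iota // nth_iota // rho_le // (ltn_trans i8).
Qed.

Section SmallEdgeSets.
Variables (T : finType) (W : {set {set T}}).
Hypothesis W_pairs : {in W, forall e : {set T}, #|e| = 2}.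

Definition meets_all (Q : {set T}) := {in W, forall e : {set T}, ~~ [disjoint e & Q]}.

Section Labelling.
Variable pt : nat -> T.
Hypothesis pt_edges : {in W, forall e : {set T}, exists2 i, i < 4 & e = [set pt i.*2; pt i.*2.+1]}.
Local Notation E := (fun s t => pt s == pt t).

Lemma edge_notin s t : ~~ linked_at E s t -> [set pt s; pt t] \notin W.
Proof.
move=> not_linked; apply/negP => /[dup] /W_pairs + /pt_edges [i i4 e].
have [-> | st _] := eqVneq (pt s) (pt t); first by rewrite setUid cards1.
apply: (negP not_linked); apply/hasP; exists i; first by rewrite mem_iota.
by have /orP [/andP [-> ->]|/andP [-> ->]] := set2_eq st e; rewrite ?orbT.
Qed.

Lemma uniq_of_pairwise Q : pairwise (apart_at E) Q -> uniq [seq pt q | q <- Q].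
Proof.
move=> Qap; rewrite uniq_pairwise pairwise_map; apply: sub_pairwise Qap => s t.
by rewrite apart_atE => /andP [].
Qed.

Lemma independent_of_pairwise Q : pairwise (apart_at E) Q ->
  {in Q &, forall s t, [set pt s; pt t] \notin W}.
Proof.
move=> Qap s t sQ tQ; have [-> | st] := eqVneq (pt s) (pt t).
  by apply/negP => /W_pairs; rewrite setUid cards1.
have s_t : s != t by apply: contraNneq st => ->.
have /orP [] := pairwise_in Qap sQ tQ s_t; rewrite apart_atE => /andP [_ /edge_notin] //.
by rewrite setUC.
Qed.

Lemma meets_all_of_covers Q (S : {set T}) :
  {in Q, forall q, pt q \in S} -> covers_at E Q -> meets_all S.
Proof.
move=> QS /allP cov e /pt_edges [i i4 ->].
have /hasP [q qQ qi] : has (fun q => E q i.*2 || E q i.*2.+1) Q.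
  by apply: cov; rewrite mem_iota.
apply/pred0Pn; exists (pt q); rewrite /= QS // andbT !inE.
by case/orP: qi => ->; rewrite ?orbT.
Qed.

End Labelling.

Lemma pair_labelling : #|W| <= 4 -> 10 <= #|T| ->
  exists pt : nat -> T,
    [/\ {in W, forall e, exists2 i, i < 4 & e = [set pt i.*2; pt i.*2.+1]},
        forall i, i < 4 -> pt i.*2 != pt i.*2.+1,
        forall k, k < 8 -> pt k != pt 8,
        forall k, k < 9 -> pt k != pt 9
      & forall k, 10 <= k -> pt k = pt 8].
Proof.
move=> W4 T10.
have [t0 [t1 t01]] : exists t0 t1 : T, t0 != t1.
  have /card_gt1P [t0 [t1 [_ _ t01]]] : 1 < #|[set: T]| by rewrite cardsT; lia.
  by exists t0, t1.
pose edge i := nth [set t0; t1] (enum W) i.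
have edge_pair i : exists xy : T * T, xy.1 != xy.2 /\ edge i = [set xy.1; xy.2].
  have /cards2P [x [y [xy ->]]] : #|edge i| == 2.
    rewrite /edge; case: (ltnP i (size (enum W))) => iW; last by rewrite nth_default // cards2 t01.
    by rewrite W_pairs // -mem_enum mem_nth.
  by exists (x, y).
have [ends endsP] := choice edge_pair.
pose ep k := if odd k then (ends k./2).2 else (ends k./2).1.
pose V := [set ep (val k) | k : 'I_8].
have V8 : #|V| <= 8 by rewrite (leq_trans (leq_imset_card _ _)) // card_ord.
have [f fV] : exists f, f \notin V.
  have /card_gt0P [f] : 0 < #|~: V| by have := cardsC V; lia.
  by rewrite inE => fV; exists f.
have [g gV gf] : exists2 g, g \notin V & g != f.
  have /card_gt0P [g] : 0 < #|~: (f |: V)|.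
    by have := cardsC (f |: V); rewrite cardsU1 fV; lia.
  by rewrite !inE negb_or => /andP [gf gV]; exists g.
pose pt k := if k < 8 then ep k else if k == 9 then g else f.
have epV k : k < 8 -> ep k \in V by move=> k8; exact: (imset_f _ (_ : Ordinal k8 \in _)).
have ends_pt i : i < 4 -> pt i.*2 = (ends i).1 /\ pt i.*2.+1 = (ends i).2.
  move=> i4; have [l1 l2] : i.*2 < 8 /\ i.*2.+1 < 8 by rewrite -muln2; lia.
  by rewrite /pt /ep l1 l2 /= odd_double doubleK uphalf_double.
exists pt; split.
- move=> e eW; have iW : index e (enum W) < 4.
    by rewrite (leq_trans _ W4) // cardE index_mem mem_enum.
  exists (index e (enum W)) => //; have [-> ->] := ends_pt _ iW.
  by have [_ <-] := endsP (index e (enum W)); rewrite /edge nth_index ?mem_enum.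
- by move=> i i4; have [-> ->] := ends_pt i i4; case: (endsP i).
- by move=> k k8; rewrite /pt k8 /=; apply: contraNneq fV => <-; apply: epV.
- move=> k; rewrite ltnS leq_eqVlt => /orP [/eqP -> /=|k8]; first by rewrite eq_sym.
  by rewrite /pt k8 /=; apply: contraNneq gV => <-; apply: epV.
- by move=> k k10; rewrite /pt ltnNge (leq_trans _ k10) //= ifN //; apply/eqP; lia.
Qed.

Lemma fan_or_quad : #|W| <= 4 -> 10 <= #|T| ->
  (exists d u w, [/\ uniq [:: d; u; w], [set d; u] \notin W, [set d; w] \notin W
                   & meets_all [set d; u; w]]) \/
  (exists a b c d, [/\ uniq [:: a; b; c; d],
                     {in [set a; b; c; d] &, forall x y, [set x; y] \notin W}
                   & meets_all [set a; b; c; d]]).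
Proof.
move=> W4 T10; have [pt [pt_edges pairs fresh8 fresh9 beyond]] := pair_labelling W4 T10.
case: (witness_atP (kernel_witness pairs fresh8 fresh9 beyond)) => [[d [u [w]]]|[a [b [c [d]]]]].
  rewrite /fan_at !apart_atE; case: ifP => // /andP [du /(edge_notin pt_edges) duW].
  case: ifP => // /andP [dw /(edge_notin pt_edges) dwW] /andP [uw cov].
  left; exists (pt d), (pt u), (pt w); split => //; first by rewrite /= !inE negb_or du dw uw.
  apply: (meets_all_of_covers pt_edges _ cov) => q.
  by rewrite !inE => /or3P [] /eqP ->; rewrite eqxx ?orbT.
rewrite /quad_at; case: ifP => // Qap cov.
right; exists (pt a), (pt b), (pt c), (pt d); split.
- exact: (uniq_of_pairwise Qap).
- move=> x y; rewrite !inE -!orbA => /or4P [] /eqP -> /or4P [] /eqP ->;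
    by apply: (independent_of_pairwise pt_edges Qap); rewrite !inE eqxx ?orbT.
- apply: (meets_all_of_covers pt_edges _ cov) => q.
  by rewrite !inE => /or4P [] /eqP ->; rewrite eqxx ?orbT.
Qed.

End SmallEdgeSets.

(** * Mutual visibility in the disjointness graph *)

Lemma disjoint_family_avoid (T I : finType) (F : I -> {set T}) (S : {set T}) :
  (forall i j, i != j -> [disjoint F i & F j]) -> #|S| < #|I| ->
  exists i, [disjoint F i & S].
Proof.
move=> F_disj SI; apply/existsP; move: SI; apply: contraTT.
rewrite -leqNgt negb_exists => /forallP meet. have pick i : exists x, x \in F i :&: S.
  by apply/set0Pn; rewrite setI_eq0 meet.
pose g i := xchoose (pick i); have gP i : g i \in F i :&: S := xchooseP (pick i).
have g_inj : injective g.
  move=> i j gij; apply/eqP/negPn/negP => /F_disj ij_disj.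
  have := gP i; have := gP j; rewrite !inE gij => /andP [gj _] /andP [gi _].
  by rewrite (disjointFr ij_disj gi) in gj.
rewrite -(card_imset _ g_inj); apply: subset_leq_card; apply/subsetP => _ /imsetP [i _ ->].
by have := gP i; rewrite inE => /andP [].
Qed.

Section ShortestPaths.
Variables (T : finType) (e : rel T).

Lemma walk_size_ge2 x y s : walk e x y s -> x != y -> ~~ e x y -> 2 <= size s.
Proof.
case: s => [|a [|b s]] //=; rewrite /walk /=; first by move=> /eqP ->; rewrite eqxx.
by rewrite andbT => /andP [xa /eqP <-]; rewrite xa.
Qed.

Lemma edge_shortest x y : x != y -> e x y -> shortest_path e x y [:: y].
Proof.
move=> xy xy_e; split => [|[|z s] //]; first by rewrite /walk /= xy_e eqxx.
by rewrite /walk /= => /eqP yx; rewrite yx eqxx in xy.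
Qed.

Lemma two_step_shortest x y z : x != y -> ~~ e x y -> e x z -> e z y ->
  shortest_path e x y [:: z; y].
Proof.
move=> xy nxy xz zy; split; first by rewrite /walk /= xz zy eqxx.
by move=> s /walk_size_ge2; apply.
Qed.

End ShortestPaths.

Section Visibility.
Variables (R : realType) (n : nat) (p : 'I_n -> point R).
Hypothesis gp : general_position p.
Hypothesis conv : convex_position p.
Local Notation adj := (disj_adj p).

Lemma crossing_pair (W : {set segment n}) : 10 <= n -> #|W| <= 4 ->
  exists x y, [/\ x \notin W, y \notin W, x != y, ~~ adj x y &
                  {in W, forall w : segment n, ~~ [disjoint val w & val x :|: val y]}].
Proof.
move=> n10 W4; pose W' := [set val s | s in W].
have W'_pairs : {in W', forall e : {set 'I_n}, #|e| = 2}.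
  by move=> _ /imsetP [s _ ->]; apply/eqP; exact: (valP s).
have W'4 : #|W'| <= 4 by rewrite (leq_trans (leq_imset_card _ _)).
have notin (s : segment n) : val s \notin W' -> s \notin W.
  by apply: contra => sW; apply: imset_f.
have meets (x y : segment n) : meets_all W' (val x :|: val y) ->
    {in W, forall w : segment n, ~~ [disjoint val w & val x :|: val y]}.
  by move=> m w wW; apply: m; apply: imset_f.
have I10 : 10 <= #|'I_n| by rewrite card_ord.
have [[d [u [w [duw du_W dw_W m]]]]|[a [b [c [d [abcd indep m]]]]]] :=
  fan_or_quad W'_pairs W'4 I10.
  move: duw; rewrite /= !inE !negb_or -!andbA => /and4P [du dw uw _].
  exists (seg du), (seg dw); split; [exact: notin | exact: notin | | |].
  - apply: contraNneq uw => /(congr1 val) /= e.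
    by have := set22 d u; rewrite e !inE eq_sym (negbTE du).
  - by apply: (common_point_not_adj p (k := d)); rewrite !inE eqxx.
  apply: meets; rewrite (_ : _ :|: _ = [set d; u; w]) //.
  by apply/setP => z; rewrite !inE; case: (z == d); case: (z == u).
have [i1 [i2 [i3 [i4 [QE cr]]]]] := four_points_crossing gp conv abcd.
have := crosses_uniq cr; rewrite /= !inE !negb_or -!andbA.
move=> /and4P [i12 i13 i14 /and4P [_ _ i34 _]].
have inQ z : z \in [set i1; i2] :|: [set i3; i4] -> z \in [set a; b; c; d] by rewrite QE.
exists (seg i12), (seg i34); split.
- by apply/notin/indep; apply: inQ; rewrite !inE eqxx ?orbT.
- by apply/notin/indep; apply: inQ; rewrite !inE eqxx ?orbT.
- apply: contraNneq i13 => /(congr1 val) /= e.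
  by have := set21 i1 i2; rewrite e !inE (negbTE i14) orbF.
- exact: (crossing_not_adj (s := seg i12) (t := seg i34) (erefl _) (erefl _) cr).
- by apply: meets; rewrite /= QE.
Qed.

End Visibility.

Section Bounds.
Variables (R : realType) (n : nat) (p : 'I_n -> point R).
Hypothesis gp : general_position p.
Hypothesis conv : convex_position p.
Hypothesis n10 : 10 <= n.
Variable H : 'I_5 -> segment n.
Hypothesis H_adj : forall k (t : segment n), [disjoint val (H k) & val t] -> disj_adj p (H k) t.
Hypothesis H_disj : forall k l, k != l -> [disjoint val (H k) & val (H l)].
Local Notation adj := (disj_adj p).

Lemma common_neighbour (x y : segment n) : exists k, adj x (H k) && adj (H k) y.
Proof.
have [|k] := @disjoint_family_avoid _ _ (fun k => val (H k)) (val x :|: val y) H_disj.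
  by rewrite card_ord (leq_ltn_trans (leq_card_setU _ _)) // (eqP (valP x)) (eqP (valP y)).
move=> kxy; exists k.
have kx : [disjoint val (H k) & val x] := disjointWr (subsetUl _ _) kxy.
have ky : [disjoint val (H k) & val y] := disjointWr (subsetUr _ _) kxy.
by rewrite disj_adjC !H_adj.
Qed.

Definition hull_set := [set H k | k : 'I_5].

Lemma hull_complement_mv : mv_set adj (~: hull_set).
Proof.
move=> x y _ _ xy; have [xy_adj|nxy] := boolP (adj x y).
  by exists [:: y]; split; [exact: edge_shortest|].
have [k /andP [xk ky]] := common_neighbour x y.
exists [:: H k; y]; split; first exact: two_step_shortest.
by rewrite /internal /= andbT in_setC negbK imset_f.
Qed.

Lemma hull_complement_card : 'C(n, 2) - 5 <= #|~: hull_set|.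
Proof.
have := cardsC hull_set; rewrite card_segment.
have : #|hull_set| <= 5 by rewrite (leq_trans (leq_imset_card _ _)) // card_ord.
lia.
Qed.

Lemma mv_set_card (U : {set segment n}) : mv_set adj U -> #|U| <= 'C(n, 2) - 5.
Proof.
move=> mvU; rewrite leqNgt; apply/negP => big.
have W4 : #|~: U| <= 4 by have := cardsC U; rewrite card_segment; lia.
have [x [y [xU yU xy nxy meet]]] := crossing_pair gp conv n10 W4.
move: xU yU; rewrite !in_setC !negbK => xU yU.
have [s [[walk_s s_min] s_int]] := mvU x y xU yU xy.
have [k /andP [xk ky]] := common_neighbour x y.
have := s_min _ (proj1 (two_step_shortest xy nxy xk ky)).
have := walk_size_ge2 walk_s xy nxy.
case: s walk_s s_int {s_min} => [|a [|b [|c s]]] //= + + _ _.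
rewrite /walk /= andbT => /andP [/andP [xa ab] /eqP b_y]; rewrite /internal /= andbT => aU.
rewrite b_y in ab.
have aW : a \in ~: U by rewrite in_setC.
case/pred0Pn: (meet a aW) => z /andP [za].
move=> /setUP [zx|zy].
  by have := common_point_not_adj p za zx; rewrite disj_adjC xa.
by have := common_point_not_adj p za zy; rewrite ab.
Qed.

End Bounds.

Theorem proposition5 (R : realType) (n : nat) (p : 'I_n -> point R) :
  (10 <= n)%N -> injective p ->
  general_position p -> convex_position p ->
  mu (disj_adj p) = ('C(n, 2) - 5)%N.
Proof.
move=> n10 p_inj gp conv.
have [H [H_adj H_disj]] := five_hull_segments gp conv p_inj n10.
apply/eqP; rewrite eqn_leq; apply/andP; split.
  by apply/bigmax_leqP => U /asboolP; apply: (mv_set_card gp conv n10 H_adj H_disj).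
apply: (bigop.bigmax_sup (~: hull_set H)); last exact: hull_complement_card.
by apply/asboolP; apply: hull_complement_mv.
Qed.
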